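(* If an $n$-Brinkhuis triple pair exists, then $n\ge 18$. Moreover, $n=18$ is attained: taking <ul> <li>$\mathcal{B}^{(0)}=\{012021020102120210,\ 012021201020120210\}$,</li> <li>$\mathcal{B}^{(1)}=\tau(\mathcal{B}^{(0)})$,</li> <li>$\mathcal{B}^{(2)}=\tau^2(\mathcal{B}^{(0)})$</li> </ul> gives an $18$-Brinkhuis triple pair.
   Context: Let $\Sigma=\{0,1,2\}$. A word over $\Sigma$ is square-free if it cannot be written as $xyyz$ with $y$ nonempty. $\mathcal{A}(n)$ is the set of square-free words of length $n$. $\tau$ is the letter permutation $0\mapsto1$, $1\mapsto2$, $2\mapsto0$, applied letterwise to words and elementwise to sets of words. An $n$-Brinkhuis triple pair consists of three sets $\mathcal{B}^{(0)},\mathcal{B}^{(1)},\mathcal{B}^{(2)}\subset\mathcal{A}(n)$. Each $\mathcal{B}^{(i)}$ has two distinct square-free words of length $n$. The defining condition: for every square-free word $w_1w_2w_3\in\mathcal{A}(3)$ and every choice $W_j\in\mathcal{B}^{(w_j)}$ for $j=1,2,3$, the concatenation $W_1W_2W_3$ is square-free. *)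

From mathcomp Require Import all_boot.
Set Implicit Arguments. Unset Strict Implicit. Unset Printing Implicit Defensive.

Notation letter := 'I_3.
Notation word := (seq letter).

Definition square_free (w : word) : Prop :=
  ~ exists x y z : word, y <> [::] /\ w = x ++ y ++ y ++ z.

Definition L0 : letter := @Ordinal 3 0 isT.
Definition L1 : letter := @Ordinal 3 1 isT.
Definition L2 : letter := @Ordinal 3 2 isT.
Definition letter_of (k : nat) : letter :=
  match k with 0 => L0 | 1 => L1 | _ => L2 end.
Definition tau (a : letter) : letter := letter_of ((nat_of_ord a).+1 %% 3).
Definition tau_word (w : word) : word := map tau w.
Definition tau_set (S : seq word) : seq word := map tau_word S.

Definition brinkhuis_triple_pair (n : nat) (B : letter -> seq word) : Prop :=
  (forall i : letter,
     size (B i) = 2 /\ uniq (B i) /\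
     forall W, W \in B i -> size W = n /\ square_free W) /\
  (forall w : word, size w = 3 -> square_free w ->
     forall W1 W2 W3 : word,
       W1 \in B (nth ord0 w 0) -> W2 \in B (nth ord0 w 1) ->
       W3 \in B (nth ord0 w 2) ->
       square_free (W1 ++ W2 ++ W3)).

Definition word_of (s : seq nat) : word := map letter_of s.

Definition B0_ex : seq word :=
  [:: word_of [:: 0;1;2;0;2;1;0;2;0;1;0;2;1;2;0;2;1;0];
      word_of [:: 0;1;2;0;2;1;2;0;1;0;2;0;1;2;0;2;1;0]].

Definition B_ex (i : letter) : seq word :=
  match nat_of_ord i with
  | 0 => B0_ex
  | 1 => tau_set B0_ex
  | _ => tau_set (tau_set B0_ex)
  end.

From mathcomp Require Import all_boot zify.
Set Implicit Arguments. Unset Strict Implicit. Unset Printing Implicit Defensive.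

(* A Brinkhuis triple pair B gives eight triples (W0, W1, W2) with Wi in B(i),
   forming a combinatorial cube {x0, y0} x {x1, y1} x {x2, y2}.  Each of them is
   admissible: its words are square-free of length n, every concatenation Wi Wj
   (i <> j) is square-free because so is iji, and the morphism i |-> Wi keeps the
   twelve square-free words of length 3 square-free.  For n < 18 an exhaustive
   search, growing square-free words one letter at a time, finds no cube of
   admissible triples. *)

Lemma square_free_infix (u w : word) : infix u w -> square_free w -> square_free u.
Proof.
move=> /infixP [p [q ->]] sf_w [x [y [z [ne_y E]]]]; apply: sf_w.
by exists (p ++ x), y, (z ++ q); rewrite E -!catA.
Qed.

Lemma square_free_rev (w : word) : square_free w -> square_free (rev w).
Proof.
move=> sf_w [x [y [z [ne_y E]]]]; apply: sf_w.
exists (rev z), (rev y), (rev x); split; first by move/(congr1 rev); rewrite revK.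
by rewrite -[w]revK E !rev_cat !catA.
Qed.

(* The VM evaluates both arguments of [orb] and [andb]; these variants stop
   at the first decisive element. *)
Fixpoint has_lazy (T : Type) (p : pred T) (s : seq T) : bool :=
  if s is x :: s' then if p x then true else has_lazy p s' else false.

Lemma has_lazyE (T : Type) (p : pred T) (s : seq T) : has_lazy p s = has p s.
Proof. by elim: s => //= x s ->; case: (p x). Qed.

Definition all_lazy (T : Type) (p : pred T) (s : seq T) : bool := ~~ has_lazy (predC p) s.

Lemma all_lazyE (T : Type) (p : pred T) (s : seq T) : all_lazy p s = all p s.
Proof. by rewrite /all_lazy has_lazyE has_predC negbK. Qed.

Fixpoint all2_lazy (S T : Type) (r : S -> T -> bool) (s : seq S) (t : seq T) : bool :=
  match s, t with
  | [::], [::] => true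
  | x :: s', y :: t' => if r x y then all2_lazy r s' t' else false
  | _, _ => false
  end.

Lemma all2_lazy_eq (T : eqType) (r : rel T) (s t : seq T) :
  r =2 eq_op -> all2_lazy r s t = (s == t).
Proof.
move=> rE; elim: s t => [|x s IH] [|y t] //=.
by rewrite rE eqseq_cons IH; case: (x == y).
Qed.

(* Letters are compared with [eqn] on their values, which the VM evaluates much
   faster than [==] on ordinals. *)
Definition eq_word (u v : word) : bool := all2_lazy (fun a b : letter => eqn a b) u v.

Lemma eq_wordE (u v : word) : eq_word u v = (u == v).
Proof. by apply: all2_lazy_eq => a b; rewrite eqnE val_eqE. Qed.

Fixpoint same_prefix (l : nat) (u v : word) : bool :=
  match l, u, v with
  | 0, _, _ => true
  | l'.+1, a :: u', b :: v' => if eqn a b then same_prefix l' u' v' else false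
  | _, _, _ => false
  end.

Lemma same_prefix_cat (t u v : word) : same_prefix (size t) (t ++ u) v = prefix t v.
Proof.
elim: t v => [|a t IH] [|b v] //=.
by rewrite IH eqnE val_eqE; case: (a == b).
Qed.

Fixpoint square_prefix_from (s d : word) (l : nat) : bool :=
  if d is _ :: d' then
    if same_prefix l s d then true else square_prefix_from s d' l.+1
  else false.

Lemma square_prefix_fromP (t d : word) : 0 < size t ->
  reflect (exists y z, size t <= size y /\ t ++ d = y ++ y ++ z)
          (square_prefix_from (t ++ d) d (size t)).
Proof.
elim: d t => [|a d IH] t t_gt0 /=.
  apply: ReflectF => -[y [z [le_ty /(congr1 size)]]]; rewrite !size_cat /=.
  by lia.
rewrite same_prefix_cat; case: ifPn => [/prefixP def_ad | not_prefix].
  by apply: ReflectT; case: def_ad => z ->; exists t, z.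
have := IH (rcons t a); rewrite cat_rcons size_rcons => /(_ isT) IHt.
apply: (iffP IHt) => -[y [z [le_ty E]]]; exists y, z; split=> //; first exact: ltnW.
rewrite ltn_neqAle le_ty andbT; apply: contraNneq not_prefix => eq_ty.
move/eqP: E; rewrite eqseq_cat // => /andP [/eqP <- /eqP ->].
by apply/prefixP; exists z.
Qed.

Definition square_prefix (s : word) : bool :=
  if s is _ :: d then square_prefix_from s d 1 else false.

Lemma square_prefixP (s : word) :
  reflect (exists y z, y <> [::] /\ s = y ++ y ++ z) (square_prefix s).
Proof.
case: s => [|a d]; first by apply: ReflectF => -[[|b y] [z []]].
apply: (iffP (@square_prefix_fromP [:: a] d isT));
  by move=> -[[|b y] [z [_ E]]] //; exists (b :: y), z.
Qed.

Fixpoint has_square (w : word) : bool :=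
  if w is _ :: w' then if square_prefix w then true else has_square w' else false.

Lemma has_square_cons (a : letter) (w : word) :
  has_square (a :: w) = square_prefix (a :: w) || has_square w.
Proof. by []. Qed.

Lemma has_squareP (w : word) :
  reflect (exists x y z, y <> [::] /\ w = x ++ y ++ y ++ z) (has_square w).
Proof.
elim: w => [|a w IH]; first by apply: ReflectF => -[[|? ?] [[|? ?] [z []]]].
rewrite has_square_cons; case: square_prefixP => [sq | no_prefix].
  by apply: ReflectT; case: sq => y [z [ne_y E]]; exists [::], y, z.
apply: (iffP IH) => [[x [y [z [ne_y ->]]]] | [[|b x] [y [z [ne_y E]]]]].
- by exists (a :: x), y, z.
- by case: no_prefix; exists y, z.
- by case: E => _ ->; exists x, y, z.
Qed.

Lemma square_freeP (w : word) : reflect (square_free w) (~~ has_square w).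
Proof. exact: negPP (has_squareP w). Qed.

Lemma square_free_aba (a b : letter) : a != b -> square_free [:: a; b; a].
Proof.
by move=> ne_ab; apply/square_freeP; move: ne_ab; case: a b => -[|[|[|?]]] ? [[|[|[|?]]] ?].
Qed.

Definition letters : seq letter := [:: L0; L1; L2].

Lemma mem_letters (a : letter) : a \in letters.
Proof. by case: a => -[|[|[|]]]. Qed.

Definition extend_left (ws : seq word) : seq word :=
  [seq c :: w | w <- ws, c <- [seq c <- letters | ~~ square_prefix (c :: w)]].

Lemma mem_iter_extend_left (x y : word) :
  square_free (y ++ x) -> y ++ x \in iter (size y) extend_left [:: x].
Proof.
elim: y => [|c y IH] sf_yx /=; first by rewrite mem_seq1.
apply/allpairsPdep; exists (y ++ x), c; split=> //.
  by apply: IH; apply: square_free_infix sf_yx; exact: suffix_infix [:: c] _.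
rewrite mem_filter mem_letters andbT; apply/negP => /square_prefixP [u [z [ne_u E]]].
by apply: sf_yx; exists [::], u, z.
Qed.

Definition square_free_words (n : nat) : seq word := iter n extend_left [:: [::]].

Lemma mem_square_free_words (w : word) :
  square_free w -> w \in square_free_words (size w).
Proof.
by move=> sf_w; have := mem_iter_extend_left (x := [::]) (y := w); rewrite cats0; apply.
Qed.

Lemma square_free_words_sound (n : nat) (w : word) :
  w \in square_free_words n -> size w = n /\ square_free w.
Proof.
elim: n w => [|n IH] w /=.
  by rewrite mem_seq1 => /eqP ->; split=> // -[[|? ?] [[|? ?] [z []]]].
case/allpairsPdep => u [c [/IH [size_u /square_freeP sf_u] + ->]].
rewrite mem_filter => /andP [no_prefix _]; split; first by rewrite /= size_u.
by apply/square_freeP; rewrite has_square_cons (negbTE no_prefix).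
Qed.

Definition right_extensions (k : nat) (x : word) : seq word :=
  [seq rev (take k u) | u <- iter k extend_left [:: rev x]].

Lemma mem_right_extensions (x y : word) :
  square_free (x ++ y) -> y \in right_extensions (size y) x.
Proof.
move=> /square_free_rev; rewrite rev_cat => sf_yx.
apply/mapP; exists (rev y ++ rev x); first by rewrite -size_rev; exact: mem_iter_extend_left.
by rewrite take_size_cat ?size_rev ?revK.
Qed.

(* Most squares of [x ++ y] are short, so the few letters around the junction
   usually decide. *)
Definition junction (x y : word) : word := drop (size x - 5) x ++ take 5 y.

Definition square_free_catb (x y : word) : bool :=
  if has_square (junction x y) then false else ~~ has_square (x ++ y).

Lemma square_free_catbE (x y : word) : square_free_catb x y = ~~ has_square (x ++ y).
Proof.
rewrite /square_free_catb; case: (boolP (has_square (x ++ y))) => [_ | /square_freeP sf_xy].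
  by case: has_square.
apply/ifF/negbTE/square_freeP; apply: square_free_infix sf_xy; apply/infixP.
exists (take (size x - 5) x), (drop 5 y).
by rewrite /junction !catA cat_take_drop -catA cat_take_drop.
Qed.

Definition partners (n : nat) (x : word) : seq word :=
  [seq y <- right_extensions n x | square_free_catb y x].

Lemma mem_partners (x y : word) :
  square_free (x ++ y) -> square_free (y ++ x) -> y \in partners (size y) x.
Proof.
move=> sf_xy /square_freeP sf_yx.
by rewrite mem_filter square_free_catbE sf_yx mem_right_extensions.
Qed.

Fixpoint choices (T : Type) (Bs : seq (seq T)) : seq (seq T) :=
  if Bs is B :: Bs' then [seq W :: t | W <- B, t <- choices Bs'] else [:: [::]].

Lemma mem_choices (T : eqType) (Bs : seq (seq T)) (t : seq T) :
  (t \in choices Bs) = (size t == size Bs) && all2 (fun W B => W \in B) t Bs.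
Proof.
elim: Bs t => [|B Bs IH] [|W t] //=.
  by apply/allpairsPdep => -[? [? [_ _ ]]].
rewrite eqSS -andbCA -IH.
by apply/allpairsPdep/andP => [[W' [t' [? ? [-> ->]]]] | []] //; exists W, t.
Qed.

Definition morph (t : seq word) (w : word) : word :=
  flatten [seq nth [::] t a | a : letter <- w].

Definition morph_square_free3 (t : seq word) : bool :=
  all (fun w => ~~ has_square (morph t w)) (square_free_words 3).

Definition candidate_triples (n : nat) : seq (seq word) :=
  flatten [seq let P := partners n x0 in
               [seq [:: x0; x1; x2] | x1 <- P, x2 <- [seq x2 <- P |
                  square_free_catb x1 x2 && square_free_catb x2 x1]]
          | x0 <- square_free_words n].

Definition admissible_triples (n : nat) : seq (seq word) :=
  [seq t <- candidate_triples n | morph_square_free3 t].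

Lemma mem_admissible_triples (n : nat) (x0 x1 x2 : word) :
  size x0 = n -> size x1 = n -> size x2 = n ->
  (forall w, size w = 3 -> square_free w -> square_free (morph [:: x0; x1; x2] w)) ->
  [:: x0; x1; x2] \in admissible_triples n.
Proof.
move=> sz0 sz1 sz2 sf_morph; set t := [:: x0; x1; x2].
have sf_pair (a b : letter) : a != b -> square_free (nth [::] t a ++ nth [::] t b).
  move=> ne_ab; have := sf_morph [:: a; b; a] erefl (square_free_aba ne_ab).
  by apply: square_free_infix; rewrite /morph /= !cats0 catA prefix_infix.
have partner (a b : letter) : a != b -> nth [::] t b \in partners n (nth [::] t a).
  move=> ne_ab; have -> : n = size (nth [::] t b) by case: b ne_ab => -[|[|[|?]]].
  by apply: mem_partners; apply: sf_pair; rewrite // eq_sym.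
rewrite mem_filter; apply/andP; split.
  by apply/allP => w /square_free_words_sound [sz_w sf_w]; exact/square_freeP/sf_morph.
apply/flatten_mapP; exists x0.
  rewrite -sz0 mem_square_free_words //.
  by apply: square_free_infix (sf_pair L0 L1 isT); exact: prefix_infix.
apply/allpairsPdep; exists x1, x2; split=> //; first exact: (partner L0 L1).
rewrite mem_filter !square_free_catbE (partner L0 L2) // andbT.
by apply/andP; split; apply/square_freeP; [exact: (sf_pair L1 L2) | exact: (sf_pair L2 L1)].
Qed.

Definition cube (t t' : seq word) : seq (seq word) :=
  choices [seq [:: p.1; p.2] | p <- zip t t'].

Definition has_cube (M : seq (seq word)) : bool :=
  has (fun t => has (fun t' =>
    all (fun p => p.1 != p.2) (zip t t') && all (fun c => c \in M) (cube t t')) M) M.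

Lemma brinkhuis_has_cube (n : nat) (B : letter -> seq word) :
  brinkhuis_triple_pair n B -> has_cube (admissible_triples n).
Proof.
move=> [B_ok B_sf].
have admissible t : t \in choices [:: B L0; B L1; B L2] -> t \in admissible_triples n.
  rewrite (@mem_choices word); case: t => [|W0 [|W1 [|W2 [|]]]] //=.
  move=> /and4P [W0_in W1_in W2_in _].
  have size_B a W : W \in B a -> size W = n by move=> /(B_ok a).2.2 [].
  apply: mem_admissible_triples;
    [exact: size_B W0_in | exact: size_B W1_in | exact: size_B W2_in |].
  move=> [|a [|b [|c [|]]]] //= _ sf_abc; rewrite /morph /= cats0.
  have in_B (d : letter) : nth [::] [:: W0; W1; W2] d \in B d.
    by move: (mem_letters d); rewrite !inE => /or3P [] /eqP ->.
  exact: B_sf [:: a; b; c] erefl sf_abc _ _ _ (in_B a) (in_B b) (in_B c).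
have pair_of a : exists x y, B a = [:: x; y] /\ x != y.
  case: (B_ok a) => + [+ _]; case: (B a) => [|x [|y [|]]] //= _.
  by rewrite inE andbT => ne_xy; exists x, y.
have [x0 [y0 [B0 ne0]]] := pair_of L0.
have [x1 [y1 [B1 ne1]]] := pair_of L1.
have [x2 [y2 [B2 ne2]]] := pair_of L2.
have cubeB : cube [:: x0; x1; x2] [:: y0; y1; y2] = choices [:: B L0; B L1; B L2].
  by rewrite B0 B1 B2.
apply/hasP; exists [:: x0; x1; x2].
  by apply: admissible; rewrite (@mem_choices word) /= B0 B1 B2 !mem_head.
apply/hasP; exists [:: y0; y1; y2].
  by apply: admissible; rewrite (@mem_choices word) /= B0 B1 B2 !inE !eqxx !orbT.
rewrite cubeB /= ne0 ne1 ne2; apply/allP => t; exact: admissible.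
Qed.

Definition has_cube_lazy (M : seq (seq word)) : bool :=
  has_lazy (fun t => has_lazy (fun t' =>
    if all_lazy (fun p => ~~ eq_word p.1 p.2) (zip t t')
    then all_lazy (fun c => has_lazy (all2_lazy eq_word c) M) (cube t t') else false) M) M.

Lemma has_cube_lazyE (M : seq (seq word)) : has_cube_lazy M = has_cube M.
Proof.
rewrite /has_cube_lazy has_lazyE; apply: eq_has => t; rewrite has_lazyE.
apply: eq_has => t'; rewrite !all_lazyE.
congr (_ && _); first by apply: eq_all => p; rewrite eq_wordE.
apply: eq_all => c; rewrite has_lazyE -has_pred1.
by apply: eq_has => s; rewrite /= (all2_lazy_eq _ _ eq_wordE) eq_sym.
Qed.

Lemma admissible_triples_no_cube (n : nat) : n < 18 -> ~~ has_cube (admissible_triples n).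
Proof.
have : all (fun n => ~~ has_cube_lazy (admissible_triples n)) (iota 0 18) by vm_compute.
by move=> /allP no_cube n_lt; rewrite -has_cube_lazyE; apply: no_cube; rewrite mem_iota.
Qed.

Definition brinkhuis_check (n : nat) (B : letter -> seq word) : bool :=
  all (fun a => [&& size (B a) == 2, uniq (B a) &
                    all (fun W => (size W == n) && ~~ has_square W) (B a)]) letters &&
  all (fun w => all (fun t => ~~ has_square (flatten t)) (choices [seq B a | a <- w]))
      (square_free_words 3).

Lemma brinkhuis_check_sound (n : nat) (B : letter -> seq word) :
  brinkhuis_check n B -> brinkhuis_triple_pair n B.
Proof.
move=> /andP [/allP B_ok /allP B_sf]; split.
  move=> a; have /and3P [/eqP -> -> /allP sf_B] := B_ok a (mem_letters a).
  by do 2!split=> //; move=> W /sf_B /andP [/eqP ? /square_freeP].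
move=> [|a [|b [|c [|]]]] //= _ /mem_square_free_words /B_sf /allP sf_abc.
move=> W1 W2 W3 W1_in W2_in W3_in.
apply/square_freeP; rewrite -[W3]cats0 -[W1 ++ _]/(flatten [:: W1; W2; W3]).
by apply: sf_abc; rewrite (@mem_choices word) /= W1_in W2_in W3_in.
Qed.

Theorem mainTheorem13 :
  (forall (n : nat) (B : 'I_3 -> seq (seq 'I_3)),
      brinkhuis_triple_pair n B -> 18 <= n) /\
  brinkhuis_triple_pair 18 B_ex.
Proof.
split; last by apply: brinkhuis_check_sound; vm_compute.
move=> n B /brinkhuis_has_cube; apply: contraTT; rewrite -ltnNge.
exact: admissible_triples_no_cube.
Qed.
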